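(* No axis rule (defined for profiles over every finite candidate set) satisfies both heredity and consistency with linearity.
   Context: Candidates come from a fixed infinite universe. An approval ballot is a nonempty subset $A\subseteq C$; a profile over $C$ is a finite sequence of ballots. An axis is a strict linear order $\triangleleft$ on $C$. A ballot $A$ is an interval of $\triangleleft$ if for all $a,b\in A$ and every $c$ with $a\triangleleft c\triangleleft b$ we have $c\in A$. A profile is linear if some axis makes all its ballots intervals; $\mathrm{con}(P)$ is the set of such axes. An axis rule maps each profile $P$ over $C$ to a nonempty set $f(P)$ of axes on $C$ closed under reversal. It is consistent with linearity if $f(P)=\mathrm{con}(P)$ for every linear profile $P$. For $C'\subseteq C$, $P_{C'}$ is the profile over $C'$ obtained by intersecting each ballot with $C'$ (ballots becoming empty are discarded), and $\triangleleft_{C'}$ is the restriction of $\triangleleft$ to $C'$. $f$ satisfies heredity if for every profile $P$ over $C$, every $C'\subseteq C$ and every $\triangleleft\in f(P)$, we have $\triangleleft_{C'}\in f(P_{C'})$. *)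

(* Universe of candidates: nat (a fixed infinite universe).
   An axis on C (strict linear order on C) is represented by the sequence
   listing C from left to right: uniq s, with the same elements as C;
   a <| b iff a occurs before b in s. *)
From mathcomp Require Import all_boot all_order.
From mathcomp Require Import finmap.
Set Implicit Arguments.
Unset Strict Implicit.
Unset Printing Implicit Defensive.
Local Open Scope fset_scope.

Definition is_ballot (C A : {fset nat}) : Prop := A != fset0 /\ A `<=` C.

Definition is_profile (C : {fset nat}) (P : seq {fset nat}) : Prop :=
  forall A, A \in P -> is_ballot C A.

Definition is_axis (C : {fset nat}) (s : seq nat) : Prop :=
  uniq s /\ (forall x, x \in s <-> x \in C).

Definition axis_lt (s : seq nat) (a b : nat) : Prop :=
  a \in s /\ b \in s /\ (index a s < index b s)%N.

Definition is_interval (s : seq nat) (A : {fset nat}) : Prop :=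
  forall a b c, a \in A -> b \in A -> c \in s ->
    axis_lt s a c -> axis_lt s c b -> c \in A.

Definition con (C : {fset nat}) (P : seq {fset nat}) (s : seq nat) : Prop :=
  is_axis C s /\ (forall A, A \in P -> is_interval s A).

Definition linear_profile (C : {fset nat}) (P : seq {fset nat}) : Prop :=
  exists s, con C P s.

Definition restrict_profile (C' : {fset nat}) (P : seq {fset nat}) : seq {fset nat} :=
  [seq A `&` C' | A <- P & A `&` C' != fset0].

Definition restrict_axis (C' : {fset nat}) (s : seq nat) : seq nat :=
  [seq x <- s | x \in C'].

Definition axis_rule_type := {fset nat} -> seq {fset nat} -> seq nat -> Prop.

Definition is_axis_rule (f : axis_rule_type) : Prop :=
  forall C P, is_profile C P ->
    (exists s, f C P s) /\
    (forall s, f C P s -> is_axis C s) /\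
    (forall s, f C P s -> f C P (rev s)).

Definition consistent_with_linearity (f : axis_rule_type) : Prop :=
  forall C P, is_profile C P -> linear_profile C P ->
    forall s, f C P s <-> con C P s.

Definition heredity (f : axis_rule_type) : Prop :=
  forall C P, is_profile C P ->
    forall C', C' `<=` C ->
      forall s, f C P s -> f C' (restrict_profile C' P) (restrict_axis C' s).

From mathcomp Require Import all_boot all_order.
From mathcomp Require Import finmap.

(* Take the cyclic profile {1,2}, {2,3}, {3,4}, {4,1} on {1,2,3,4}, which is
   not linear, and any axis s the rule returns for it.  Deleting one candidate
   leaves a path, and every axis consistent with a path puts the middle
   candidate of the path strictly inside.  By heredity and consistency with
   linearity, the restriction of s to each triple of cyclically consecutive
   candidates therefore has the middle candidate strictly inside; but the
   leftmost candidate of s is the middle of such a triple and stays leftmost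
   in the restriction. *)

Set Implicit Arguments.
Unset Strict Implicit.
Unset Printing Implicit Defensive.
Local Open Scope fset_scope.

Definition intervalb (s : seq nat) (A : {fset nat}) : bool :=
  all (fun a => all (fun b => all (fun c => (a \in A) ==> (b \in A) ==>
    (index a s < index c s)%N ==> (index c s < index b s)%N ==> (c \in A)) s) s) s.

Lemma intervalP s A : reflect (is_interval s A) (intervalb s A).
Proof.
apply: (iffP idP) => [H a b c Aa Ab sc [sa [_ lt_ac]] [_ [sb lt_cb]] | H].
  move/allP: H => /(_ a sa)/allP/(_ b sb)/allP/(_ c sc).
  by rewrite Aa Ab lt_ac lt_cb.
apply/allP=> a sa; apply/allP=> b sb; apply/allP=> c sc.
apply/implyP=> Aa; apply/implyP=> Ab; apply/implyP=> lt_ac; apply/implyP=> lt_cb.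
exact: (H a b c Aa Ab sc (conj sa (conj sc lt_ac)) (conj sc (conj sb lt_cb))).
Qed.

Lemma mem_restrict_profile C P B :
  B \in P -> B `&` C != fset0 -> B `&` C \in restrict_profile C P.
Proof. by move=> PB BC; apply/mapP; exists B; rewrite // mem_filter BC. Qed.

Lemma restrict_profile_profile C P : is_profile C (restrict_profile C P).
Proof.
move=> A /mapP[B]; rewrite mem_filter => /andP[BC _] ->.
by split; last exact: fsubsetIr.
Qed.

Lemma restrict_profile_linear C P w :
  is_axis C w -> (forall B, B \in P -> is_interval w (B `&` C)) ->
  linear_profile C (restrict_profile C P).
Proof.
move=> Cw Pw; exists w; split=> // A /mapP[B].
by rewrite mem_filter => /andP[_ PB] ->; apply: Pw.
Qed.

Lemma restrict_axis_cons C x s :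
  x \in C -> restrict_axis C (x :: s) = x :: restrict_axis C s.
Proof. by rewrite /restrict_axis /= => ->. Qed.

Lemma hereditary_consistent_con f C P C' s :
  heredity f -> consistent_with_linearity f ->
  is_profile C P -> C' `<=` C -> f C P s ->
  linear_profile C' (restrict_profile C' P) ->
  con C' (restrict_profile C' P) (restrict_axis C' s).
Proof.
move=> fher fcons PC C'C fs lin.
apply/(fcons _ _ (@restrict_profile_profile C' P) lin).
exact: (fher _ _ PC _ C'C _ fs).
Qed.

Lemma interval_head_before a t A b c :
  a \notin t -> is_interval (a :: t) A -> a \in A -> b \in A -> c \notin A ->
  b \in t -> c \in t -> (index b t < index c t)%N.
Proof.
move=> ta Aint Aa Ab Ac tb tc.
have neq_ca : c != a by apply: contraNneq _ Ac => ->.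
have neq_cb : c != b by apply: contraNneq _ Ac => ->.
have neq_ba : b != a by apply: contraNneq _ ta => <-.
have neq_idx : index c t != index b t.
  by apply: contraNneq _ neq_cb => /(congr1 (nth 0 t)); rewrite !nth_index // => ->.
rewrite ltnNge leq_eqVlt negb_or neq_idx /=.
apply: contraNN Ac => lt_cb; apply: (Aint a b c Aa Ab); first by rewrite inE tc orbT.
  by rewrite /axis_lt /= eqxx eq_sym (negbTE neq_ca) !inE eqxx tc orbT.
by rewrite /axis_lt /= ![a == _]eq_sym (negbTE neq_ca) (negbTE neq_ba) !inE tc tb !orbT.
Qed.

Lemma con_triple_not_head P p x n t :
  uniq [:: p; x; n] -> [fset p; x] \in P -> [fset x; n] \in P ->
  ~ con [fset p; x; n] (restrict_profile [fset p; x; n] P) (x :: t).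
Proof.
move=> /= /and3P[]; rewrite !inE !negb_or => /andP[neq_px neq_pn] neq_xn _.
move=> Ppx Pxn [[/andP[xt _] memt] Pint]; set T := [fset p; x; n] in memt Pint.
have ballot_interval B : B \in P -> x \in B -> is_interval (x :: t) (B `&` T).
  move=> PB Bx; apply/Pint/mem_restrict_profile => //.
  by apply/fset0Pn; exists x; rewrite inE Bx !inE eqxx orbT.
have tp : p \in t by move: (memt p).2; rewrite !inE eqxx (negbTE neq_px) => /(_ isT).
have tn : n \in t.
  by move: (memt n).2; rewrite !inE eqxx !orbT eq_sym (negbTE neq_xn) => /(_ isT).
have lt_pn : (index p t < index n t)%N.
  apply: (interval_head_before xt (ballot_interval _ Ppx _)) => //;
    by rewrite !inE ?eqxx ?orbT // ![n == _]eq_sym (negbTE neq_pn) (negbTE neq_xn).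
have lt_np : (index n t < index p t)%N.
  apply: (interval_head_before xt (ballot_interval _ Pxn _)) => //;
    by rewrite !inE ?eqxx ?orbT // (negbTE neq_px) (negbTE neq_pn).
by move: (ltn_trans lt_pn lt_np); rewrite ltnn.
Qed.

Lemma triple_axis (p x n : nat) :
  uniq [:: p; x; n] -> is_axis [fset p; x; n] [:: p; x; n].
Proof. by split=> // y; rewrite !inE -!orbA. Qed.

Definition square : {fset nat} := [fset 1; 2; 3; 4].

Definition square_cycle : seq {fset nat} :=
  [:: [fset 1; 2]; [fset 2; 3]; [fset 3; 4]; [fset 4; 1]].

Lemma square_cycle_profile : is_profile square square_cycle.
Proof.
move=> A; rewrite !inE => /or4P[]/eqP->; split;
  by [apply/fset0Pn; eexists; apply: fset21
     | apply/fsubsetP=> y; rewrite !inE => /orP[]/eqP->].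
Qed.

Lemma square_cycle_triple x : x \in square -> exists p n,
  [/\ uniq [:: p; x; n], [fset p; x] \in square_cycle, [fset x; n] \in square_cycle,
      [fset p; x; n] `<=` square &
      linear_profile [fset p; x; n] (restrict_profile [fset p; x; n] square_cycle)].
Proof.
rewrite /square !inE -!orbA => /or4P[]/eqP->;
  [exists 4, 2 | exists 1, 3 | exists 2, 4 | exists 3, 1];
  (split; [by [] | by rewrite !inE eqxx ?orbT | by rewrite !inE eqxx ?orbT
          | by apply/fsubsetP=> y; rewrite !inE -!orbA => /or3P[]/eqP-> | ]);
  apply: (restrict_profile_linear (triple_axis _)) => //.
all: by move=> B; rewrite !inE => /or4P[]/eqP->; apply/intervalP; rewrite /intervalb /= !inE.
Qed.

Theorem mainTheorem18 :
  ~ (exists f : axis_rule_type,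
       is_axis_rule f /\ heredity f /\ consistent_with_linearity f).
Proof.
move=> [f [frule [fher fcons]]].
have [[s fs] [faxis _]] := frule _ _ square_cycle_profile.
have [_ mem_s] := faxis s fs.
case: s fs mem_s => [|x s] fs mem_s.
  by have := (mem_s 1).2; rewrite /square !inE eqxx => /(_ isT).
have [p [n [uniq_pxn Ppx Pxn sub lin]]] := square_cycle_triple ((mem_s x).1 (mem_head x s)).
apply: (con_triple_not_head (t := restrict_axis [fset p; x; n] s) uniq_pxn Ppx Pxn).
rewrite -restrict_axis_cons; last by rewrite !inE eqxx orbT.
exact: hereditary_consistent_con fher fcons square_cycle_profile sub fs lin.
Qed.
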